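(* Let $L=\langle S,A,\to\rangle$ be a labelled transition system. For all $x,y,z\in\{o,b\}$ and all $s,t\in S$: $s\le_{(z,x)}t$ if and only if $s\le_{(z,y)}t$.
   Context: An LTS is $\langle S,A,\to\rangle$ with states $S$, actions $A$ containing the internal action $\tau$, and $\to\subseteq S\times A\times S$; write $s\xrightarrow{a}t$, and $\twoheadrightarrow$ for the reflexive-transitive closure of $\xrightarrow{\tau}$. For $R\subseteq S\times S$ and $s,s',t$: $s\twoheadrightarrow_{o,R,t}s'$ iff $s\twoheadrightarrow s'$; $s\twoheadrightarrow_{b,R,t}s'$ iff $s\twoheadrightarrow s'$, $t\,R\,s$ and $t\,R\,s'$. For $x,y\in\{o,b\}$, a (not necessarily symmetric) relation $R\subseteq S\times S$ is an $(x,y)$-generic simulation if whenever $s\,R\,t$ and $s\xrightarrow{a}s'$, either $a=\tau$ and $s'\,R\,t$, or there exist $t',t_1,t_2$ with $t\twoheadrightarrow_{x,R,s}t_1\xrightarrow{a}t_2\twoheadrightarrow_{y,R,s'}t'$ and $s'\,R\,t'$. Write $s\le_{(x,y)}t$ iff there is an $(x,y)$-generic simulation $R$ with $s\,R\,t$. *)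

From Stdlib Require Import Relations.

Record LTS := {
  lts_state : Type;
  lts_act : Type;
  lts_tau : lts_act;
  lts_step : lts_state -> lts_act -> lts_state -> Prop
}.

Inductive mode := o | b.

Section Generic.
Variable L : LTS.
Notation S := (lts_state L).
Notation A := (lts_act L).
Notation tau := (lts_tau L).
Notation step := (lts_step L).

Definition tau_steps : S -> S -> Prop :=
  clos_refl_trans S (fun s s' => step s tau s').

Definition mode_steps (x : mode) (R : S -> S -> Prop) (t s s' : S) : Prop :=
  match x with
  | o => tau_steps s s'
  | b => tau_steps s s' /\ R t s /\ R t s'
  end.

Definition generic_simulation (x y : mode) (R : S -> S -> Prop) : Prop :=
  forall s t s' (a : A), R s t -> step s a s' ->
    (a = tau /\ R s' t) \/
    (exists t' t1 t2,
        mode_steps x R s t t1 /\ step t1 a t2 /\ mode_steps y R s' t2 t' /\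
        R s' t').

Definition gen_sim_le (x y : mode) (s t : S) : Prop :=
  exists R, generic_simulation x y R /\ R s t.

End Generic.

From Stdlib Require Import Relations.

(* Every (z,b)-simulation is a (z,o)-simulation, since the b-mode only adds
   constraints to the final tau-run. Conversely, if R is a (z,o)-simulation,
   relating s to every tau-predecessor of an R-partner of s gives a
   (z,b)-simulation: along the final run t2 ->> t' every state is a
   tau-predecessor of t', hence related to s'. *)

Section GenericSimulation.
Variable L : LTS.
Notation S := (lts_state L).

Lemma mode_steps_tau_steps (x : mode) (R : S -> S -> Prop) (t s s' : S) :
  mode_steps L x R t s s' -> tau_steps L s s'.
Proof. destruct x; simpl; tauto. Qed.

Lemma generic_simulation_b_o (z : mode) (R : S -> S -> Prop) :
  generic_simulation L z b R -> generic_simulation L z o R.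
Proof.
  intros HR p u p' a Hpu Hstep.
  destruct (HR p u p' a Hpu Hstep)
    as [Htau | (u' & u1 & u2 & Hu1 & Ha & Hu2 & Hu')]; [now left |].
  right; exists u', u1, u2; simpl.
  eauto using mode_steps_tau_steps.
Qed.

Definition tau_pre (R : S -> S -> Prop) (p u : S) : Prop :=
  exists u', tau_steps L u u' /\ R p u'.

Lemma tau_pre_refl (R : S -> S -> Prop) (p u : S) : R p u -> tau_pre R p u.
Proof. intros Hpu; exists u; split; [apply rt_refl | exact Hpu]. Qed.

Lemma mode_steps_tau_pre (x : mode) (R : S -> S -> Prop) (p u v v1 : S) :
  tau_steps L u v -> R p v -> mode_steps L x R p v v1 ->
  mode_steps L x (tau_pre R) p u v1.
Proof.
  intros Huv Hpv Hsteps.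
  pose proof (rt_trans _ _ _ _ _ Huv (mode_steps_tau_steps _ _ _ _ _ Hsteps))
    as Huv1.
  destruct x; simpl in *; [exact Huv1 |].
  repeat split; [exact Huv1 | exists v; auto | now apply tau_pre_refl].
Qed.

Lemma tau_steps_tau_pre (R : S -> S -> Prop) (p u u' : S) :
  tau_steps L u u' -> R p u' -> mode_steps L b (tau_pre R) p u u'.
Proof.
  intros Huu' Hpu'.
  repeat split; [exact Huu' | exists u'; auto | now apply tau_pre_refl].
Qed.

Lemma generic_simulation_tau_pre (z : mode) (R : S -> S -> Prop) :
  generic_simulation L z o R -> generic_simulation L z b (tau_pre R).
Proof.
  intros HR p u p' a (v & Huv & Hpv) Hstep.
  destruct (HR p v p' a Hpv Hstep)
    as [[Ha Hp'v] | (v' & v1 & v2 & Hv1 & Ha & Hv2 & Hp'v')].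
  - left; split; [exact Ha | exists v; auto].
  - right; exists v', v1, v2; split; [| split; [| split]].
    + exact (mode_steps_tau_pre _ _ _ _ _ _ Huv Hpv Hv1).
    + exact Ha.
    + exact (tau_steps_tau_pre _ _ _ _ Hv2 Hp'v').
    + now apply tau_pre_refl.
Qed.

Lemma gen_sim_le_b_o (z : mode) (s t : S) :
  gen_sim_le L z b s t -> gen_sim_le L z o s t.
Proof.
  intros (R & HR & Hst); exists R; auto using generic_simulation_b_o.
Qed.

Lemma gen_sim_le_o_b (z : mode) (s t : S) :
  gen_sim_le L z o s t -> gen_sim_le L z b s t.
Proof.
  intros (R & HR & Hst); exists (tau_pre R); split.
  - now apply generic_simulation_tau_pre.
  - now apply tau_pre_refl.
Qed.

End GenericSimulation.

Theorem proposition6p13 (L : LTS) (x y z : mode) (s t : lts_state L) :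
  gen_sim_le L z x s t <-> gen_sim_le L z y s t.
Proof.
  assert (Hmode : forall w, gen_sim_le L z w s t <-> gen_sim_le L z o s t).
  { intros []; split; auto using gen_sim_le_b_o, gen_sim_le_o_b. }
  exact (iff_trans (Hmode x) (iff_sym (Hmode y))).
Qed.
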